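(* Let $\mathcal{H}$ be a hedgehog and let $k>2$ be an integer. Then the $k$th Order Preserving Set $\mathcal{P}_k$ of $\mathcal{H}$ is singular, i.e. there exists $s\in[0,2\pi)$ with $\mathcal{P}_k'(s)=0$. Moreover, if $\mathcal{P}_k$ has only finitely many singular points (parameters $s\in[0,2\pi)$ with $\mathcal{P}_k'(s)=0$), then their number is divisible by $k$.
   Context: Write $u(s)=(\cos s,\sin s)$, $u'(s)=(-\sin s,\cos s)$. A hedgehog is a closed planar curve determined by a smooth $2\pi$-periodic function $h$ (its support function) via $\mathcal{H}(s)=h(s)u(s)+h'(s)u'(s)$. Its average width is $\overline{w}=\frac1\pi\int_0^{2\pi}h(s)\,ds$. For $(x,y)\in\mathbb{R}^2$ let $(x,y)^\perp=(-y,x)$. The $k$th Order Preserving Set of $\mathcal{H}$ is the curve $\mathcal{P}_k(s)=\frac{1}{k}\sum_{j=1}^{k}\Big(\cos\big(\tfrac{2\pi j}{k}\big)\,\mathcal{H}\big(s+\tfrac{2\pi j}{k}\big)-\sin\big(\tfrac{2\pi j}{k}\big)\,\mathcal{H}\big(s+\tfrac{2\pi j}{k}\big)^{\perp}\Big)-\frac{1}{2}\overline{w}\,u(s)$, $s\in[0,2\pi]$. *)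

From Stdlib Require Import Reals Lra Lia List.
From Coquelicot Require Import Coquelicot.
Import ListNotations.
Open Scope R_scope.

Definition smooth (h : R -> R) : Prop :=
  forall (n : nat) (x : R), ex_derive (Derive_n h n) x.

Definition periodic_2pi (h : R -> R) : Prop :=
  forall s : R, h (s + 2 * PI) = h s.

(* The hedgehog H(s) = h(s) u(s) + h'(s) u'(s), u(s) = (cos s, sin s). *)
Definition hedgehog_x (h : R -> R) (s : R) : R :=
  h s * cos s + Derive h s * (- sin s).
Definition hedgehog_y (h : R -> R) (s : R) : R :=
  h s * sin s + Derive h s * cos s.

Definition avg_width (h : R -> R) : R := / PI * RInt h 0 (2 * PI).

Definition sum_1_to (k : nat) (f : nat -> R) : R :=
  fold_right Rplus 0 (map f (seq 1 k)).

Definition theta (k j : nat) : R := 2 * PI * INR j / INR k.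

(* k-th Order Preserving Set:
   P_k(s) = 1/k sum_{j=1}^k (cos th_j H(s+th_j) - sin th_j H(s+th_j)^perp)
            - 1/2 wbar u(s),  with (x,y)^perp = (-y, x). *)
Definition OPS_x (h : R -> R) (k : nat) (s : R) : R :=
  / INR k * sum_1_to k (fun j =>
      cos (theta k j) * hedgehog_x h (s + theta k j)
      - sin (theta k j) * (- hedgehog_y h (s + theta k j)))
  - / 2 * avg_width h * cos s.
Definition OPS_y (h : R -> R) (k : nat) (s : R) : R :=
  / INR k * sum_1_to k (fun j =>
      cos (theta k j) * hedgehog_y h (s + theta k j)
      - sin (theta k j) * hedgehog_x h (s + theta k j))
  - / 2 * avg_width h * sin s.

Definition OPS_singular (h : R -> R) (k : nat) (s : R) : Prop :=
  Derive (OPS_x h k) s = 0 /\ Derive (OPS_y h k) s = 0.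

(* Termwise, [H' = rho u'] with [rho = h + h''], and rotating [H'(s + theta_j)] by [-theta_j]
   gives [rho (s + theta_j) u'(s)]. Hence [P_k' = G u'] with
   [G(s) = (1/k) sum_j rho (s + theta_j) - wbar/2], and the singular points are the zeros of [G].
   A primitive of [G] is [(1/k) sum_j (int_0^(s + theta_j) h + h'(s + theta_j)) - wbar s / 2];
   over one period each integral grows by [int_0^(2 pi) h = pi wbar], which the linear term
   cancels, so [G] vanishes in [(0, 2 pi)] by Rolle. Finally [s |-> s + 2 pi/k] permutes the
   angles [theta_j] cyclically modulo [2 pi], so [G] is [2 pi/k]-periodic and its zeros in
   [[0, 2 pi)] are the [k] translates of those in [[0, 2 pi/k)]. *)

From Stdlib Require Import Reals List Arith Lra Lia Permutation.
From Coquelicot Require Import Coquelicot.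
Open Scope R_scope.

Definition sum_over (L : list nat) (f : nat -> R) : R := fold_right Rplus 0 (map f L).

Lemma sum_over_ext L f g : (forall j, f j = g j) -> sum_over L f = sum_over L g.
Proof. intros Hfg; unfold sum_over; f_equal; apply map_ext, Hfg. Qed.

Lemma sum_over_app L1 L2 f : sum_over (L1 ++ L2) f = sum_over L1 f + sum_over L2 f.
Proof. induction L1 as [|j L IH]; unfold sum_over in *; simpl; [ring|]. rewrite IH; ring. Qed.

Lemma sum_over_mulr L f a : sum_over L (fun j => f j * a) = sum_over L f * a.
Proof. induction L as [|j L IH]; unfold sum_over in *; simpl; [ring|]. rewrite IH; ring. Qed.

Lemma sum_over_add_const L f a :
  sum_over L (fun j => f j + a) = sum_over L f + INR (length L) * a.
Proof.
  induction L as [|j L IH]; unfold sum_over in *; cbn [map fold_right length].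
  - simpl; ring.
  - rewrite IH, S_INR; ring.
Qed.

Lemma is_derive_sum_over L (F : nat -> R -> R) dF x :
  (forall j, is_derive (F j) x (dF j)) ->
  is_derive (fun s => sum_over L (fun j => F j s)) x (sum_over L dF).
Proof.
  intros HF; induction L as [|j L IH]; unfold sum_over in *; simpl.
  - apply (is_derive_const (K := R_AbsRing) (V := R_NormedModule) 0).
  - apply (is_derive_plus (F j) (fun s => fold_right Rplus 0 (map (fun j => F j s) L))); auto.
Qed.

Lemma sum_1_to_rotate (g : nat -> R) k :
  (0 < k)%nat -> g (S k) = g 1%nat -> sum_1_to k (fun j => g (S j)) = sum_1_to k g.
Proof.
  intros Hk Hg; destruct k as [|m]; [lia|].
  change (sum_over (seq 1 (S m)) (fun j => g (S j)) = sum_over (seq 1 (S m)) g).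
  unfold sum_over at 1; rewrite <- map_map, seq_shift; fold (sum_over (seq 2 (S m)) g).
  rewrite seq_S, sum_over_app; replace (2 + m)%nat with (S (S m)) by lia.
  unfold sum_over; simpl; rewrite Hg; ring.
Qed.

Lemma is_derive_shift (f : R -> R) a x l :
  is_derive f (x + a) l -> is_derive (fun s => f (s + a)) x l.
Proof.
  intros Hf.
  assert (Ha : is_derive (fun s => s + a) x 1) by (auto_derive; auto; ring).
  pose proof (is_derive_comp f (fun s => s + a) x l 1 Hf Ha) as Hc.
  rewrite (scal_one (K := R_AbsRing)) in Hc; exact Hc.
Qed.

(* No differentiability is needed: the difference quotients defining [Derive] are periodic. *)
Lemma Derive_periodic (f : R -> R) T :
  (forall s, f (s + T) = f s) -> forall s, Derive f (s + T) = Derive f s.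
Proof.
  intros Hf s; unfold Derive; f_equal; apply Lim_ext; intros e.
  replace (s + T + e) with (s + e + T) by ring; rewrite !Hf; reflexivity.
Qed.

Lemma is_derive_RInt_0 (f : R -> R) :
  (forall y, continuous f y) -> forall x, is_derive (RInt f 0) x (f x).
Proof.
  intros Hf x; apply (is_derive_RInt f (RInt f 0) 0 x); [| apply Hf].
  apply filter_forall; intros b; apply (RInt_correct (V := R_CompleteNormedModule)).
  apply ex_RInt_continuous; intros; apply Hf.
Qed.

Lemma RInt_periodic_shift (f : R -> R) T :
  (forall y, continuous f y) -> (forall y, f (y + T) = f y) ->
  forall x, RInt f 0 (x + T) = RInt f 0 x + RInt f 0 T.
Proof.
  intros Hf HT x.
  assert (Hex : forall a b, ex_RInt f a b)
    by (intros; apply (ex_RInt_continuous (V := R_CompleteNormedModule)); intros; apply Hf).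
  rewrite <- (RInt_Chasles f 0 T (x + T)) by apply Hex.
  assert (Htail : RInt f T (x + T) = RInt f 0 x).
  { replace T with (1 * 0 + T) at 1 by ring; replace (x + T) with (1 * x + T) by ring.
    rewrite <- RInt_comp_lin by apply Hex.
    apply RInt_ext; intros y _; rewrite (scal_one (K := R_AbsRing)), Rmult_1_l; apply HT. }
  rewrite Htail; apply Rplus_comm.
Qed.

Lemma is_derive_root_between (F f : R -> R) a b :
  a < b -> (forall x, is_derive F x (f x)) -> F a = F b -> exists c, a < c < b /\ f c = 0.
Proof.
  intros Hab HF HFab.
  destruct (MVT_cor2 F f a b Hab) as [c [Hc Hcab]]; [intros; apply is_derive_Reals, HF|].
  exists c; split; [exact Hcab|].
  apply (Rmult_eq_reg_r (b - a)); lra.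
Qed.

Lemma exists_period_index (c s : R) n :
  0 <= s < INR n * c -> exists m, (m < n)%nat /\ INR m * c <= s < INR (S m) * c.
Proof.
  induction n as [|n IH]; intros [Hs0 Hsn]; [simpl in Hsn; lra|].
  destruct (Rlt_dec s (INR n * c)) as [Hlt | Hge].
  - destruct IH as [m [Hm Hms]]; [lra|]; exists m; split; [lia | exact Hms].
  - exists n; split; [lia | lra].
Qed.

Section TranslationInvariantSet.

Variable Z : R -> Prop.
Variable c : R.
Hypothesis Z_shift : forall s, Z (s + c) <-> Z s.

Lemma Z_shift_nat m s : Z (s + INR m * c) <-> Z s.
Proof.
  induction m as [|m IH]; [simpl; rewrite Rmult_0_l, Rplus_0_r; tauto|].
  rewrite <- IH, <- (Z_shift (s + INR m * c)), S_INR.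
  replace (s + (INR m + 1) * c) with (s + INR m * c + c) by ring; tauto.
Qed.

Definition translates (l0 : list R) (n : nat) : list R :=
  flat_map (fun m => map (fun s => s + INR m * c) l0) (seq 0 n).

Lemma length_translates l0 n : length (translates l0 n) = (length l0 * n)%nat.
Proof.
  unfold translates; rewrite (flat_map_constant_length (c := length l0)), length_seq; [lia|].
  intros; apply length_map.
Qed.

Lemma In_translates l0 n y :
  In y (translates l0 n) <-> exists m s, (m < n)%nat /\ In s l0 /\ y = s + INR m * c.
Proof.
  unfold translates; rewrite in_flat_map; split.
  - intros [m [Hm Hy]]; apply in_seq in Hm; apply in_map_iff in Hy as [s [Hsy Hs]].
    exists m, s; repeat split; [lia | exact Hs | auto].
  - intros [m [s [Hm [Hs Hy]]]]; exists m; split; [apply in_seq; lia|].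
    apply in_map_iff; exists s; auto.
Qed.

Lemma NoDup_translates l0 n :
  NoDup l0 -> (forall s, In s l0 -> 0 <= s < c) -> NoDup (translates l0 n).
Proof.
  intros Hl0 Hrange; induction n as [|n IH]; [constructor|].
  unfold translates; rewrite seq_S, flat_map_app; simpl flat_map; rewrite app_nil_r.
  apply NoDup_app; [exact IH | |].
  - apply NoDup_map_NoDup_ForallPairs; [intros a b _ _ Hab; lra | exact Hl0].
  - intros y Hy Hy'; apply In_translates in Hy as [m [s [Hm [Hs ->]]]].
    apply in_map_iff in Hy' as [s' [Hss' Hs']].
    apply Hrange in Hs; apply Hrange in Hs'.
    assert (INR (S m) <= INR n) by (apply le_INR; lia); rewrite S_INR in *; nra.
Qed.

Lemma translation_invariant_count_divisible k l :
  NoDup l -> (forall s, In s l <-> 0 <= s < INR k * c /\ Z s) -> Nat.divide k (length l).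
Proof.
  intros Hl Hin.
  set (l0 := filter (fun s => if Rlt_dec s c then true else false) l).
  assert (Hl0 : forall s, In s l0 <-> In s l /\ s < c).
  { intros s; unfold l0; rewrite filter_In.
    destruct (Rlt_dec s c); split; intros [? ?]; auto; try discriminate; contradiction. }
  assert (Hsame : forall y, In y l <-> In y (translates l0 k)).
  { intros y; rewrite In_translates; split.
    - intros Hy; apply Hin in Hy as [Hy HZ].
      destruct (exists_period_index c y k Hy) as [m [Hm Hmy]].
      assert (INR (S m) <= INR k) by (apply le_INR; lia).
      exists m, (y - INR m * c); repeat split; [lia | | ring].
      rewrite S_INR in *; apply Hl0; split; [|lra].
      apply Hin; pose proof (pos_INR m); split; [nra|].
      apply (Z_shift_nat m); replace (y - INR m * c + INR m * c) with y by ring; exact HZ.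
    - intros [m [s [Hm [Hs ->]]]]; apply Hl0 in Hs as [Hs Hsc]; apply Hin in Hs as [Hs HZ].
      assert (INR (S m) <= INR k) by (apply le_INR; lia).
      apply Hin; rewrite S_INR in *; pose proof (pos_INR m).
      split; [nra | apply Z_shift_nat, HZ]. }
  exists (length l0); rewrite <- length_translates.
  apply Permutation_length, NoDup_Permutation; auto.
  apply NoDup_translates; [apply NoDup_filter, Hl|].
  intros s Hs; apply Hl0 in Hs as [Hs Hsc]; apply Hin in Hs; lra.
Qed.

End TranslationInvariantSet.

Definition radius_of_curvature (h : R -> R) (s : R) : R := h s + Derive (Derive h) s.

(* The radius of curvature of [P_k]: [P_k' = OPS_radius h k * u']. *)
Definition OPS_radius (h : R -> R) (k : nat) (s : R) : R :=
  / INR k * sum_1_to k (fun j => radius_of_curvature h (s + theta k j)) - / 2 * avg_width h.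

Section OPSDerivative.

Variable h : R -> R.
Hypothesis h_derivable : forall x, ex_derive h x.
Hypothesis h'_derivable : forall x, ex_derive (Derive h) x.
Variable k : nat.

Let rho := radius_of_curvature h.

Lemma is_derive_hedgehog_x x : is_derive (hedgehog_x h) x (rho x * - sin x).
Proof.
  unfold hedgehog_x; auto_derive.
  - repeat split; auto.
  - change (Derive (fun y => h y) x) with (Derive h x).
    change (Derive (fun y => Derive h y) x) with (Derive (Derive h) x).
    unfold rho, radius_of_curvature; ring.
Qed.

Lemma is_derive_hedgehog_y x : is_derive (hedgehog_y h) x (rho x * cos x).
Proof.
  unfold hedgehog_y; auto_derive.
  - repeat split; auto.
  - change (Derive (fun y => h y) x) with (Derive h x).
    change (Derive (fun y => Derive h y) x) with (Derive (Derive h) x).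
    unfold rho, radius_of_curvature; ring.
Qed.

Lemma is_derive_rotated_hedgehog_x t x :
  is_derive (fun s => cos t * hedgehog_x h (s + t) - sin t * - hedgehog_y h (s + t)) x
    (rho (x + t) * - sin x).
Proof.
  replace (rho (x + t) * - sin x)
    with (cos t * (rho (x + t) * - sin (x + t)) - sin t * - (rho (x + t) * cos (x + t))).
  - apply (is_derive_minus (fun s => cos t * hedgehog_x h (s + t))); apply is_derive_scal;
      [| apply (is_derive_opp (fun s => hedgehog_y h (s + t)))]; apply is_derive_shift;
      [apply is_derive_hedgehog_x | apply is_derive_hedgehog_y].
  - replace (sin x) with (sin (x + t - t)) by (f_equal; ring); rewrite sin_minus; ring.
Qed.

Lemma is_derive_rotated_hedgehog_y t x :
  is_derive (fun s => cos t * hedgehog_y h (s + t) - sin t * hedgehog_x h (s + t)) x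
    (rho (x + t) * cos x).
Proof.
  replace (rho (x + t) * cos x)
    with (cos t * (rho (x + t) * cos (x + t)) - sin t * (rho (x + t) * - sin (x + t))).
  - apply (is_derive_minus (fun s => cos t * hedgehog_y h (s + t))); apply is_derive_scal;
      apply is_derive_shift; [apply is_derive_hedgehog_y | apply is_derive_hedgehog_x].
  - replace (cos x) with (cos (x + t - t)) by (f_equal; ring); rewrite cos_minus; ring.
Qed.

Lemma Derive_OPS_x s : Derive (OPS_x h k) s = OPS_radius h k s * - sin s.
Proof.
  apply is_derive_unique; unfold OPS_x, OPS_radius; change (sum_1_to k) with (sum_over (seq 1 k)).
  replace (_ * - sin s) with
    (/ INR k * sum_over (seq 1 k) (fun j => rho (s + theta k j) * - sin s)
     - / 2 * avg_width h * - sin s) by (rewrite sum_over_mulr; unfold rho; ring).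
  apply (is_derive_minus (fun s => / INR k * sum_over (seq 1 k) _)); apply is_derive_scal.
  - apply (is_derive_sum_over _ (fun j s => _)); intros j; apply is_derive_rotated_hedgehog_x.
  - apply is_derive_Reals, derivable_pt_lim_cos.
Qed.

Lemma Derive_OPS_y s : Derive (OPS_y h k) s = OPS_radius h k s * cos s.
Proof.
  apply is_derive_unique; unfold OPS_y, OPS_radius; change (sum_1_to k) with (sum_over (seq 1 k)).
  replace (_ * cos s) with
    (/ INR k * sum_over (seq 1 k) (fun j => rho (s + theta k j) * cos s)
     - / 2 * avg_width h * cos s) by (rewrite sum_over_mulr; unfold rho; ring).
  apply (is_derive_minus (fun s => / INR k * sum_over (seq 1 k) _)); apply is_derive_scal.
  - apply (is_derive_sum_over _ (fun j s => _)); intros j; apply is_derive_rotated_hedgehog_y.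
  - apply is_derive_Reals, derivable_pt_lim_sin.
Qed.

Lemma OPS_singular_iff s : OPS_singular h k s <-> OPS_radius h k s = 0.
Proof.
  unfold OPS_singular; rewrite Derive_OPS_x, Derive_OPS_y.
  pose proof (sin2_cos2 s) as Hsc; unfold Rsqr in Hsc.
  split.
  - intros [Hx Hy]; nra.
  - intros ->; split; ring.
Qed.

End OPSDerivative.

Lemma radius_of_curvature_periodic h :
  periodic_2pi h -> forall s, radius_of_curvature h (s + 2 * PI) = radius_of_curvature h s.
Proof.
  intros Hper s; unfold radius_of_curvature.
  rewrite Hper, !(Derive_periodic _ _ (Derive_periodic _ _ Hper)); reflexivity.
Qed.

Lemma theta_S k j : theta k (S j) = theta k j + 2 * PI / INR k.
Proof. unfold theta, Rdiv; rewrite S_INR; ring. Qed.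

Lemma OPS_radius_shift h k :
  periodic_2pi h -> (0 < k)%nat -> forall s, OPS_radius h k (s + 2 * PI / INR k) = OPS_radius h k s.
Proof.
  intros Hper Hk s; unfold OPS_radius; do 2 f_equal.
  set (g j := radius_of_curvature h (s + theta k j)).
  rewrite <- (sum_1_to_rotate g k Hk).
  - apply sum_over_ext; intros j; unfold g; rewrite theta_S; f_equal; ring.
  - unfold g; replace (s + theta k (S k)) with (s + theta k 1 + 2 * PI).
    + apply radius_of_curvature_periodic, Hper.
    + unfold theta; rewrite (S_INR k); change (INR 1) with 1; field; apply not_0_INR; lia.
Qed.

Definition OPS_radius_primitive (h : R -> R) (k : nat) (s : R) : R :=
  / INR k * sum_1_to k (fun j => RInt h 0 (s + theta k j) + Derive h (s + theta k j))
  - / 2 * avg_width h * s.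

Section OPSRadiusZero.

Variable h : R -> R.
Hypothesis h_derivable : forall x, ex_derive h x.
Hypothesis h'_derivable : forall x, ex_derive (Derive h) x.
Hypothesis h_periodic : periodic_2pi h.
Variable k : nat.
Hypothesis k_pos : (0 < k)%nat.

Let h_continuous y : continuous h y := ex_derive_continuous h y (h_derivable y).

Lemma is_derive_OPS_radius_primitive s :
  is_derive (OPS_radius_primitive h k) s (OPS_radius h k s).
Proof.
  replace (OPS_radius h k s) with (/ INR k * sum_over (seq 1 k)
    (fun j => radius_of_curvature h (s + theta k j)) - / 2 * avg_width h * 1)
    by (unfold OPS_radius, sum_1_to, sum_over; ring).
  unfold OPS_radius_primitive; change (sum_1_to k) with (sum_over (seq 1 k)).
  apply (is_derive_minus (fun s => / INR k * sum_over (seq 1 k) _)); apply is_derive_scal.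
  - apply (is_derive_sum_over _ (fun j s => _)); intros j.
    apply (is_derive_plus (fun s => RInt h 0 (s + theta k j))); apply is_derive_shift;
      [apply is_derive_RInt_0, h_continuous | apply Derive_correct, h'_derivable].
  - apply is_derive_Reals, derivable_pt_lim_id.
Qed.

Lemma OPS_radius_primitive_periodic :
  OPS_radius_primitive h k (2 * PI) = OPS_radius_primitive h k 0.
Proof.
  unfold OPS_radius_primitive, avg_width.
  change (sum_1_to k) with (sum_over (seq 1 k)).
  rewrite (sum_over_ext _ _ (fun j => (RInt h 0 (0 + theta k j) + Derive h (0 + theta k j))
                                      + RInt h 0 (2 * PI))).
  - rewrite sum_over_add_const, length_seq.
    pose proof PI_RGT_0; assert (INR k <> 0) by (apply not_0_INR; lia).
    field; split; lra.
  - intros j; rewrite Rplus_0_l, (Rplus_comm (2 * PI)).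
    rewrite (RInt_periodic_shift h _ h_continuous h_periodic).
    rewrite (Derive_periodic h _ h_periodic); ring.
Qed.

Lemma OPS_radius_has_zero : exists s, 0 < s < 2 * PI /\ OPS_radius h k s = 0.
Proof.
  apply (is_derive_root_between (OPS_radius_primitive h k)).
  - pose proof PI_RGT_0; lra.
  - exact is_derive_OPS_radius_primitive.
  - symmetry; exact OPS_radius_primitive_periodic.
Qed.

End OPSRadiusZero.

Theorem proposition3p13 (h : R -> R) (k : nat)
  (Hsmooth : smooth h) (Hper : periodic_2pi h) (Hk : (2 < k)%nat) :
  (exists s : R, 0 <= s < 2 * PI /\ OPS_singular h k s) /\
  (forall l : list R, NoDup l ->
     (forall s : R, In s l <-> (0 <= s < 2 * PI /\ OPS_singular h k s)) ->
     Nat.divide k (length l)).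
Proof.
  assert (Hk0 : (0 < k)%nat) by lia.
  assert (dh : forall x, ex_derive h x) by exact (Hsmooth 0%nat).
  assert (ddh : forall x, ex_derive (Derive h) x) by exact (Hsmooth 1%nat).
  split.
  - destruct (OPS_radius_has_zero h dh ddh Hper k Hk0) as [s [Hs Hzero]].
    exists s; split; [lra | apply OPS_singular_iff; assumption].
  - intros l Hl Hin.
    apply (translation_invariant_count_divisible (fun s => OPS_radius h k s = 0) (2 * PI / INR k)).
    + intros s; rewrite OPS_radius_shift by assumption; tauto.
    + exact Hl.
    + intros s; rewrite Hin, (OPS_singular_iff h dh ddh).
      replace (INR k * (2 * PI / INR k)) with (2 * PI)
        by (field; apply not_0_INR; lia); tauto.
Qed.
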